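(* Let $p$ be a prime and $(r,e,d)\in\mathscr{D}(p)$. Then $\det M_d(f(x)^e)$ is divisible by $\delta(x_1,\ldots,x_r)^{2e-(p-1)}$ in $\mathbb{F}_p[x_1,\ldots,x_r]$.
   Context: $\mathscr{D}(p)$ is the set of integer triples $(r,e,d)$ with $r\ge2$, $\frac{p-1}{2}<e\le p-1$, $1\le d\le p$, and $d(p-1)\le re\le(d+1)(p-1)$. Let $x_1,\ldots,x_r$ be independent indeterminates over $\mathbb{F}_p$, $f(x)=(x-x_1)\cdots(x-x_r)$, write $f(x)^e=\sum_{i\ge0}c_ix^i$ ($c_i=0$ for $i<0$), and let $M_d(f(x)^e)$ be the $d\times d$ matrix with $(i,j)$ entry $c_{ip+j-d-1}$. Put $\delta(x_1,\ldots,x_r)=\prod_{1\le i<j\le r}(x_i-x_j)$. *)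

From HB Require Import structures.
From mathcomp Require Import all_boot all_order all_algebra.
From mathcomp Require Import multinomials.mpoly.
Set Implicit Arguments. Unset Strict Implicit. Unset Printing Implicit Defensive.
Import GRing.Theory.
Local Open Scope ring_scope.

(* The set D(p) of triples (r, e, d). (p-1)/2 < e is written p-1 < 2e. *)
Definition inD (p r e d : nat) : Prop :=
  [/\ (2 <= r)%N, (p.-1 < 2 * e)%N, (e <= p.-1)%N, (1 <= d <= p)%N
    & (d * p.-1 <= r * e <= d.+1 * p.-1)%N].

Definition fpoly (p r : nat) : {poly {mpoly 'F_p[r]}} :=
  \prod_(i < r) ('X - ('X_i : {mpoly 'F_p[r]})%:P).

Definition coefz (R : nzRingType) (g : {poly R}) (k : int) : R :=
  match k with Posz n => g`_n | Negz _ => 0 end.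

(* M_d(g): d x d matrix whose (i,j) entry (1-based) is c_{ip+j-d-1};
   with 0-based indices i', j' this is c_{(i'+1)p + (j'+1) - d - 1}. *)
Definition Md (R : nzRingType) (p d : nat) (g : {poly R}) : 'M[R]_d :=
  \matrix_(i < d, j < d)
     coefz g ((i.+1 * p)%N%:Z + (j.+1)%N%:Z - d%:Z - 1).

Definition delta (p r : nat) : {mpoly 'F_p[r]} :=
  \prod_(i < r) \prod_(j < r | (i < j)%N) ('X_i - 'X_j).

(* Fix a pair i < j and combine the rows of M_d(f^e) with weights (x_i^p)^q: in
   column c the combined entry is a weighted sum of coefficients of
   X^(d-1-c) f^e = g (X - x_i)^e (X - x_j)^e.  Expanding (X - x_j)^e in powers of
   X - x_i and x_i - x_j gives
     (X - x_i)^e (X - x_j)^e = (X - x_i)^p V + (x_i - x_j)^(2e-p+1) U,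
   where (X - x_i)^p = X^p - x_i^p in characteristic p, and the weighted sum
   annihilates multiples of X^p - x_i^p by telescoping.  So the combined row, hence
   the determinant, is divisible by (x_i - x_j)^(2e-(p-1)).  These powers are
   pairwise coprime because the substitution x_i := x_j has kernel (x_i - x_j) and
   does not kill x_a - x_b for any other pair a < b; hence their product
   delta^(2e-(p-1)) divides the determinant too. *)

From HB Require Import structures.
From mathcomp Require Import all_boot all_order all_algebra.
From mathcomp Require Import multinomials.mpoly.
From mathcomp Require Import zify ring.
Set Implicit Arguments. Unset Strict Implicit. Unset Printing Implicit Defensive.
Import GRing.Theory.
Local Open Scope ring_scope.

Section Divisibility.
Variable R : comNzRingType.

Definition dvdr (x y : R) := exists q, y = q * x.

Lemma dvdr0 x : dvdr x 0.
Proof. by exists 0; rewrite mul0r. Qed.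

Lemma dvdrD x y z : dvdr x y -> dvdr x z -> dvdr x (y + z).
Proof. by move=> [a ->] [b ->]; exists (a + b); rewrite mulrDl. Qed.

Lemma dvdr_mull x y z : dvdr x y -> dvdr x (z * y).
Proof. by move=> [a ->]; exists (z * a); rewrite mulrA. Qed.

Lemma dvdr_sum (I : Type) (s : seq I) (P : pred I) (F : I -> R) x :
  (forall i, P i -> dvdr x (F i)) -> dvdr x (\sum_(i <- s | P i) F i).
Proof. by move=> dvF; elim/big_ind: _ => //; [exact: dvdr0 | exact: dvdrD]. Qed.

Lemma dvdr_subXX l x y k : dvdr l (x - y) -> dvdr l (x ^+ k - y ^+ k).
Proof. by rewrite subrXX mulrC; apply: dvdr_mull. Qed.

Lemma dvdr_sub_prod (I : Type) (s : seq I) (F G : I -> R) l :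
  (forall i, dvdr l (F i - G i)) -> dvdr l (\prod_(i <- s) F i - \prod_(i <- s) G i).
Proof.
move=> dvFG; elim/big_rec2: _ => [|i y z _ dvyz]; first by rewrite subrr; exact: dvdr0.
have -> : F i * z - G i * y = F i * (z - y) + y * (F i - G i) by ring.
by apply: dvdrD; apply: dvdr_mull.
Qed.

(* [(w *m A) *m \adj A = \det A *: w], read at coordinate [i]. *)
Lemma dvdr_det n (A : 'M[R]_n) (w : 'rV_n) (i : 'I_n) x :
  w 0 i = 1 -> (forall j, dvdr x ((w *m A) 0 j)) -> dvdr x (\det A).
Proof.
move=> wi1 dvwA.
have <- : (w *m A *m \adj A) 0 i = \det A.
  by rewrite -mulmxA mul_mx_adj mul_mx_scalar mxE wi1 mulr1.
by rewrite mxE; apply: dvdr_sum => j _; rewrite mulrC; apply: dvdr_mull.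
Qed.

End Divisibility.

Lemma exprD_split (R : comNzRingType) (y c : R) n j :
  exists A B, (y + c) ^+ n = y ^+ (n - j) * A + c ^+ j.+1 * B.
Proof.
exists (\sum_(i < n.+1 | (i <= j)%N) (y ^+ ((n - i) - (n - j)) * c ^+ i) *+ 'C(n, i)).
exists (\sum_(i < n.+1 | ~~ (i <= j)%N) (y ^+ (n - i) * c ^+ (i - j.+1)) *+ 'C(n, i)).
rewrite exprDn (bigID (fun i : 'I_n.+1 => i <= j)%N) /= !big_distrr /=.
congr (_ + _); apply: eq_bigr => i lei; rewrite mulrnAr.
  by rewrite mulrA -exprD subnKC // leq_sub2l.
by rewrite mulrCA -exprD subnKC // ltnNge.
Qed.

Section Poly.
Variable R : comNzRingType.

Lemma XsubC_exp_pchar p (a : R) : p \in [pchar R] ->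
  ('X - a%:P) ^+ p = 'X^p - (a ^+ p)%:P.
Proof.
move=> pcharR; have pcharP : p \in [pchar {poly R}] by rewrite pchar_poly.
have := pFrobenius_autB_comm pcharP (mulrC 'X a%:P).
by rewrite !pFrobenius_autE rmorphXn.
Qed.

Lemma XsubC_exp2_decomp p e (a b : R) :
  p \in [pchar R] -> (p <= 2 * e)%N -> (e <= p)%N ->
  exists V U, ('X - a%:P) ^+ e * ('X - b%:P) ^+ e =
     ('X^p - (a ^+ p)%:P) * V + ((a - b) ^+ (2 * e - p).+1)%:P * U.
Proof.
move=> pcharR p_le2e e_lep.
set y := 'X - a%:P; set c := (a - b)%:P.
have -> : 'X - b%:P = y + c by rewrite /y /c polyCB; ring.
have [A [B ->]] := exprD_split y c e (2 * e - p).
exists A, (y ^+ e * B).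
rewrite -(XsubC_exp_pchar a pcharR) rmorphXn -/c.
have -> : y ^+ p = y ^+ e * y ^+ (e - (2 * e - p)) by rewrite -exprD; congr (_ ^+ _); lia.
ring.
Qed.

(* On [u = X^(d-1-j) h] this is the combination of the rows of [Md p d h]
   with weights [(a^p)^q], read in column [j] (see [Md_coefE]). *)
Definition sect_eval (p N : nat) (a : R) (u : {poly R}) : R :=
  \sum_(q < N) a ^+ (p * q) * u`_(q * p + p.-1).

Lemma sect_evalD p N a u v :
  sect_eval p N a (u + v) = sect_eval p N a u + sect_eval p N a v.
Proof. by rewrite -big_split; apply: eq_bigr => q _; rewrite coefD mulrDr. Qed.

Lemma sect_evalCM p N a t v : sect_eval p N a (t%:P * v) = t * sect_eval p N a v.
Proof. by rewrite big_distrr; apply: eq_bigr => q _; rewrite coefCM mulrCA. Qed.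

Lemma sect_eval_widen p N M a (u : {poly R}) : (N <= M)%N -> (size u <= N * p + p.-1)%N ->
  sect_eval p M a u = sect_eval p N a u.
Proof.
move=> leNM size_u; rewrite /sect_eval.
rewrite (big_ord_widen _ (fun q => a ^+ (p * q) * u`_(q * p + p.-1)) leNM) [RHS]big_mkcond.
apply: eq_bigr => q _; case: ifPn => // /negbTE; rewrite ltnNge => /negbFE leNq.
by rewrite nth_default ?mulr0 // (leq_trans size_u) // leq_add2r leq_mul2r leNq orbT.
Qed.

Lemma sect_eval_XnsubCM p N a (V : {poly R}) : (0 < p)%N ->
  sect_eval p N.+1 a (('X^p - (a ^+ p)%:P) * V) =
  - (a ^+ (p * N.+1) * V`_((N.+1 * p).-1)).
Proof.
move=> p_gt0; elim: N => [|N IH].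
  rewrite /sect_eval big_ord1 /= mulrBl coefB coefXnM coefCM ifT; last by lia.
  by rewrite !muln0 mul0n muln1 add0n mul1n expr0 mul1r sub0r.
rewrite /sect_eval big_ord_recr /= -/(sect_eval p N.+1 a _) IH.
rewrite mulrBl coefB coefXnM coefCM ifF; last by lia.
have -> : (N.+1 * p + p.-1 - p = (N.+1 * p).-1)%N by lia.
have -> : (N.+1 * p + p.-1 = (N.+2 * p).-1)%N by lia.
have -> : (p * N.+2 = p * N.+1 + p)%N by lia.
rewrite exprD; ring.
Qed.

Lemma sect_eval_XnsubCM_eq0 p N a (V : {poly R}) : (0 < p)%N -> (size V <= (N.+1 * p).-1)%N ->
  sect_eval p N.+1 a (('X^p - (a ^+ p)%:P) * V) = 0.
Proof. by move=> p_gt0 size_V; rewrite sect_eval_XnsubCM // nth_default // mulr0 oppr0. Qed.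

Lemma dvdr_sect_eval p e N (a b : R) (g : {poly R}) :
  p \in [pchar R] -> (p <= 2 * e)%N -> (e <= p)%N ->
  (size (g * (('X - a%:P) ^+ e * ('X - b%:P) ^+ e))%R <= N * p + p.-1)%N ->
  dvdr ((a - b) ^+ (2 * e - p).+1)
       (sect_eval p N a (g * (('X - a%:P) ^+ e * ('X - b%:P) ^+ e))).
Proof.
move=> pcharR p_le2e e_lep; set u := g * _ => size_u.
have p_gt0 : (0 < p)%N by rewrite prime_gt0 // (pcharf_prime pcharR).
have [V [U EVU]] := XsubC_exp2_decomp a b pcharR p_le2e e_lep.
set M := (N + size (g * V)%R)%N.
have size_gV : (size (g * V)%R <= (M.+1 * p).-1)%N.
  have : (M.+1 <= M.+1 * p)%N by rewrite leq_pmulr.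
  lia.
rewrite -(@sect_eval_widen p N M.+1 a u) //; last by lia.
rewrite /u EVU mulrDr !(mulrCA g) sect_evalD sect_eval_XnsubCM_eq0 // add0r sect_evalCM.
by exists (sect_eval p M.+1 a (g * U)); rewrite mulrC.
Qed.
End Poly.

Section Cancellation.
Variables (R : idomainType) (sigma : {rmorphism R -> R}) (l : R).
Hypotheses (l_neq0 : l != 0) (sigma_kerE : forall P, sigma P = 0 <-> dvdr l P).

Lemma dvdr_cancel k Q T : sigma T != 0 -> dvdr (l ^+ k) (Q * T) -> dvdr (l ^+ k) Q.
Proof.
move=> sT_neq0; elim: k Q => [|k IH] Q; first by exists Q; rewrite mulr1.
move=> [z Ez].
have /sigma_kerE [Q1 EQ1] : sigma Q = 0.
  have : sigma (Q * T) = 0 by apply/sigma_kerE; exists (z * l ^+ k); rewrite Ez exprSr mulrA.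
  by rewrite rmorphM => /eqP; rewrite mulf_eq0 (negbTE sT_neq0) orbF => /eqP.
have [w Ew] : dvdr (l ^+ k) Q1.
  apply: IH; exists z; apply: (mulIf l_neq0).
  by rewrite -mulrA (mulrC T) mulrA -EQ1 Ez exprSr mulrA.
by exists w; rewrite EQ1 Ew exprSr mulrA.
Qed.

End Cancellation.

Lemma dvdr_prod_coprime (R : idomainType) (I : eqType) (l : I -> R)
    (sigma : I -> {rmorphism R -> R}) (s : seq I) k P :
  uniq s ->
  {in s, forall x, l x != 0 /\ forall Q, sigma x Q = 0 <-> dvdr (l x) Q} ->
  {in s &, forall x y, x != y -> sigma x (l y) != 0} ->
  {in s, forall x, dvdr (l x ^+ k) P} ->
  dvdr (\prod_(x <- s) l x ^+ k) P.
Proof.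
elim: s => [|x s IH] /=; first by move=> *; exists P; rewrite big_nil mulr1.
move=> /andP [xNs s_uniq] ker_s sigma_s dv_s.
have mem_s y : y \in s -> y \in x :: s by rewrite inE => ->; rewrite orbT.
have [Q EQ] : dvdr (\prod_(y <- s) l y ^+ k) P.
  apply: IH => // [y ys | y z ys zs | y ys].
  - exact: ker_s (mem_s y ys).
  - exact: sigma_s (mem_s y ys) (mem_s z zs).
  - exact: dv_s (mem_s y ys).
have [l_neq0 kerE] := ker_s x (mem_head x s).
have sigma_prod_neq0 : sigma x (\prod_(y <- s) l y ^+ k) != 0.
  rewrite rmorph_prod prodf_seq_neq0; apply/allP => y ys /=.
  rewrite rmorphXn expf_neq0 // sigma_s ?mem_head ?mem_s //.
  by apply: contraNneq xNs => ->.
have := dv_s x (mem_head x s); rewrite EQ => /(dvdr_cancel l_neq0 kerE sigma_prod_neq0).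
by move=> [w ->]; exists w; rewrite big_cons mulrA.
Qed.

Section IdentifyVariables.
Variables (n : nat) (R : idomainType).

Definition identify_tuple (i j : 'I_n) : n.-tuple {mpoly R[n]} :=
  [tuple 'X_(if l == i then j else l) | l < n].

Lemma mpolyXU_inj : injective (fun i : 'I_n => 'X_i : {mpoly R[n]}).
Proof.
move=> i j /(congr1 (mcoeff U_(i))); rewrite !mcoeffXU eqxx.
by case: eqP => // _ /eqP; rewrite oner_eq0.
Qed.

Lemma identify_X i j l : 'X_l \mPo identify_tuple i j = 'X_(if l == i then j else l).
Proof. by rewrite comp_mpolyXU -tnth_nth tnth_mktuple. Qed.

Lemma dvdr_sub_identify i j P : dvdr ('X_i - 'X_j) (P - (P \mPo identify_tuple i j)).
Proof.
elim/mpolyind: P => [|c m P _ _ IH]; first by rewrite comp_mpoly0 subr0; exact: dvdr0.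
have -> : c *: 'X_[m] + P - ((c *: 'X_[m] + P) \mPo identify_tuple i j) =
    c%:MP * ('X_[m] - ('X_[m] \mPo identify_tuple i j)) + (P - (P \mPo identify_tuple i j)).
  by rewrite comp_mpolyD comp_mpolyZ -!mul_mpolyC; ring.
apply: dvdrD => //; apply: dvdr_mull.
rewrite comp_mpolyX (mpolyXE_id _ m); apply: dvdr_sub_prod => l; apply: dvdr_subXX.
rewrite tnth_mktuple; case: eqP => [->|_]; first by exists 1; rewrite mul1r.
by rewrite subrr; exact: dvdr0.
Qed.

Lemma identify_kerE i j P :
  P \mPo identify_tuple i j = 0 <-> dvdr ('X_i - 'X_j) P.
Proof.
split=> [P0 | [Q ->]]; first by have := dvdr_sub_identify i j P; rewrite P0 subr0.
by rewrite rmorphM /= comp_mpolyB !identify_X eqxx; case: eqP => [->|_]; rewrite subrr mulr0.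
Qed.

Lemma identify_XsubX_neq0 (i j a b : 'I_n) :
  (i < j)%N -> (a < b)%N -> (a, b) != (i, j) -> ('X_a - 'X_b) \mPo identify_tuple i j != 0.
Proof.
move=> lt_ij lt_ab neq_ab; rewrite comp_mpolyB !identify_X subr_eq0.
apply/negP => /eqP /mpolyXU_inj.
case: (a =P i) => [ai|ai]; case: (b =P i) => [bi|bi] E.
- by move: lt_ab; rewrite ai bi ltnn.
- by move: neq_ab; rewrite ai -E eqxx.
- by move: lt_ab lt_ij; rewrite -E bi; lia.
- by move: lt_ab; rewrite E ltnn.
Qed.

End IdentifyVariables.
Arguments identify_tuple {n R} i j.

Lemma Md_coefE (R : nzRingType) p d (h : {poly R}) (q j : 'I_d) : (d <= p)%N ->
  Md p d h q j = ('X^(d.-1 - j) * h)`_(q * p + p.-1).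
Proof.
move=> le_dp; have lt_jd := ltn_ord j.
rewrite mxE coefXnM ifF; last by lia.
by have -> : ((q.+1 * p)%N%:Z + (j.+1)%N%:Z - d%:Z - 1)%R =
             (q * p + p.-1 - (d.-1 - j))%N%:Z by lia.
Qed.

Lemma dvdr_det_Md (R : comNzRingType) p e d (a b : R) (g : {poly R}) :
  p \in [pchar R] -> (p <= 2 * e)%N -> (e <= p)%N -> (0 < d <= p)%N ->
  (size (g * (('X - a%:P) ^+ e * ('X - b%:P) ^+ e))%R <= (d.+1 * p.-1).+1)%N ->
  dvdr ((a - b) ^+ (2 * e - p).+1)
       (\det (Md p d (g * (('X - a%:P) ^+ e * ('X - b%:P) ^+ e)))).
Proof.
move=> pcharR p_le2e e_lep /andP [d_gt0 le_dp]; set h := g * _ => size_h.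
apply: (@dvdr_det _ _ _ (\row_(q < d) a ^+ (p * q)) (Ordinal d_gt0)) => [|j].
  by rewrite mxE muln0 expr0.
have -> : (\row_(q < d) a ^+ (p * q) *m Md p d h) 0 j = sect_eval p d a ('X^(d.-1 - j) * h).
  by rewrite mxE; apply: eq_bigr => q _; rewrite mxE Md_coefE.
rewrite /h mulrA; apply: dvdr_sect_eval => //; rewrite -mulrA -/h.
apply: leq_trans (size_polyMleq _ _) _; rewrite size_polyXn.
have := ltn_ord j; nia.
Qed.

Lemma pchar_mpoly_Fp p r : prime p -> p \in [pchar {mpoly 'F_p[r]}].
Proof. by move=> p_prime; apply: (rmorph_pchar (@mpolyC r 'F_p)); apply: pchar_Fp. Qed.

Lemma size_fpoly p r : size (fpoly p r) = r.+1.
Proof. by rewrite size_prod_XsubC [index_enum _]unlock -enumT size_enum_ord. Qed.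

Lemma fpoly_exp_split p r e (i j : 'I_r) : i != j ->
  exists g, fpoly p r ^+ e = g * (('X - ('X_i)%:P) ^+ e * ('X - ('X_j)%:P) ^+ e).
Proof.
move=> neq_ij; rewrite /fpoly (bigD1 i) //= (bigD1 j) /=; last by rewrite eq_sym.
by eexists; rewrite !exprMn mulrA mulrC.
Qed.

Lemma dvdr_det_Md_fpoly p r e d (i j : 'I_r) : prime p -> inD p r e d -> i != j ->
  dvdr (('X_i - 'X_j) ^+ (2 * e - p.-1)) (\det (Md p d (fpoly p r ^+ e))).
Proof.
move=> p_prime [_ lt_p1_2e le_e_p1 d_range /andP [_ le_re]] neq_ij.
have p_gt1 := prime_gt1 p_prime.
have size_fe : (size (fpoly p r ^+ e) <= (r * e).+1)%N.
  by have := size_poly_exp_leq (fpoly p r) e; rewrite size_fpoly.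
have [g Eg] := fpoly_exp_split p e neq_ij.
have -> : (2 * e - p.-1 = (2 * e - p).+1)%N by lia.
rewrite Eg; apply: dvdr_det_Md; rewrite ?pchar_mpoly_Fp -?Eg //; try lia.
exact: leq_trans size_fe _.
Qed.

Theorem lemma2 (p r e d : nat) :
  prime p -> inD p r e d ->
  exists q : {mpoly 'F_p[r]},
    \det (Md p d (fpoly p r ^+ e)) = q * delta p r ^+ (2 * e - p.-1)%N.
Proof.
move=> p_prime hD; set k := (2 * e - p.-1)%N.
pose s := [seq x : 'I_r * 'I_r <- index_enum _ | (x.1 < x.2)%N].
have -> : delta p r ^+ k = \prod_(x <- s) ('X_x.1 - 'X_x.2) ^+ k.
  by rewrite /delta pair_big_dep /= big_filter prodrXl.
apply: (dvdr_prod_coprime (l := fun x => 'X_x.1 - 'X_x.2)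
  (sigma := fun x => comp_mpoly (identify_tuple x.1 x.2) : {rmorphism _ -> _})).
- by rewrite filter_uniq // index_enum_uniq.
- move=> x; rewrite mem_filter => /andP [lt_x _]; split; last exact: identify_kerE.
  by rewrite subr_eq0; apply/eqP => /mpolyXU_inj eq_x; rewrite eq_x ltnn in lt_x.
- move=> [x1 x2] [y1 y2]; rewrite !mem_filter /= => /andP [lt_x _] /andP [lt_y _] neq_xy.
  by apply: identify_XsubX_neq0; rewrite // eq_sym.
- move=> x; rewrite mem_filter => /andP [lt_x _].
  by apply: dvdr_det_Md_fpoly; rewrite // neq_ltn lt_x.
Qed.
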